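(* Let $p\in\mathbb{Z}[x_1,x_2,x_3,x_4,x_5,x_6]$. If $p(\sin\alpha_1,\sin\alpha_2,\sin\alpha_3,\cos\alpha_1,\cos\alpha_2,\cos\alpha_3)=0$ holds for the interior angles $\alpha_1,\alpha_2,\alpha_3$ of some generic Euclidean triangle, then it holds for the interior angles of every Euclidean triangle.
   Context: A Euclidean triangle with edge lengths $\ell_1,\ell_2,\ell_3$ is generic if for some real $k>0$ the numbers $k\ell_1,k\ell_2,k\ell_3$ are algebraically independent over $\mathbb{Q}$ (no nonzero integer polynomial in three variables vanishes on them). The angle $\alpha_i$ is the interior angle opposite the edge of length $\ell_i$. *)

From HB Require Import structures.
From mathcomp Require Import all_boot all_order all_algebra.
From mathcomp Require Import mpoly.
From mathcomp Require Import all_classical all_reals all_analysis.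
Set Implicit Arguments. Unset Strict Implicit. Unset Printing Implicit Defensive.
Import Order.TTheory GRing.Theory Num.Theory.
Local Open Scope ring_scope.

Definition zeval (R : realType) (n : nat) (p : {mpoly int[n]}) (v : 'I_n -> R) : R :=
  mmap (fun z : int => z%:~R) v p.

Definition pt3 (R : realType) (a0 a1 a2 : R) : 'I_3 -> R :=
  fun i => nth 0 [:: a0; a1; a2] i.

Definition pt6 (R : realType) (a0 a1 a2 a3 a4 a5 : R) : 'I_6 -> R :=
  fun i => nth 0 [:: a0; a1; a2; a3; a4; a5] i.

Definition is_triangle (R : realType) (l1 l2 l3 : R) : Prop :=
  [/\ 0 < l1, 0 < l2, 0 < l3 & [/\ l1 < l2 + l3, l2 < l1 + l3 & l3 < l1 + l2]].

(* Algebraic independence over Q (equivalently over Z) of a0 a1 a2. *)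
Definition alg_indep3 (R : realType) (a0 a1 a2 : R) : Prop :=
  forall q : {mpoly int[3]}, q != 0 -> zeval q (pt3 a0 a1 a2) != 0.

Definition generic_triangle (R : realType) (l1 l2 l3 : R) : Prop :=
  is_triangle l1 l2 l3 /\ exists k : R, 0 < k /\ alg_indep3 (k * l1) (k * l2) (k * l3).

(* Interior angle opposite the side of length a, the other sides being b, c
   (law of cosines). *)
Definition opp_angle (R : realType) (a b c : R) : R :=
  acos ((b ^+ 2 + c ^+ 2 - a ^+ 2) / (2 * b * c)).

Definition angle_point (R : realType) (l1 l2 l3 : R) : 'I_6 -> R :=
  let a1 := opp_angle l1 l2 l3 in
  let a2 := opp_angle l2 l1 l3 in
  let a3 := opp_angle l3 l1 l2 in
  pt6 (sin a1) (sin a2) (sin a3) (cos a1) (cos a2) (cos a3).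

From HB Require Import structures.
From mathcomp Require Import all_boot all_order all_algebra.
From mathcomp Require Import mpoly.
From mathcomp Require Import all_classical all_reals all_analysis.
From mathcomp Require Import ring lra.
Set Implicit Arguments. Unset Strict Implicit. Unset Printing Implicit Defensive.

(** With [D = 2 l1 l2 l3] and Heron's product [H] of the sides, the laws of
   cosines and sines give [cos ai = li (lj^2 + lk^2 - li^2) / D] and
   [sin ai = li sqrt H / D].  Clearing denominators in [p] therefore yields
   integer polynomials [A], [B] in the sides with
   [D^d p(sin, cos) = A + sqrt H * B] at every triangle.  The norm
   [A^2 - H B^2] vanishes at the scaled generic triangle, hence identically by
   algebraic independence.  As a polynomial in [l1], [H] has leading
   coefficient [-1], so [A^2 = H B^2] forces [B = 0]; then [A = 0] as well, and
   [D^d p(sin, cos)] vanishes at every triangle. *)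
Import Order.TTheory GRing.Theory Num.Theory.
Local Open Scope ring_scope.

Section TriangleAlgebra.
Variable T : comNzRingType.
Implicit Types a b c : T.

Definition heron a b c : T := (a + b + c) * (- a + b + c) * (a - b + c) * (a + b - c).
Definition cos_num a b c : T := b ^+ 2 + c ^+ 2 - a ^+ 2.
Definition angle_den a b c : T := 2 * a * b * c.
Definition angle_num a b c (i : 'I_6) : T :=
  nth 0 [:: a; b; c; a * cos_num a b c; b * cos_num b a c; c * cos_num c a b] i.

Lemma heronCA a b c : heron b a c = heron a b c.
Proof. by rewrite /heron; ring. Qed.

Lemma heron_rotr a b c : heron c a b = heron a b c.
Proof. by rewrite /heron; ring. Qed.

End TriangleAlgebra.

Section TriangleAlgebraMorphism.
Variables (T S : comNzRingType) (f : {rmorphism T -> S}).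
Implicit Types a b c : T.

Lemma rmorph_heron a b c : f (heron a b c) = heron (f a) (f b) (f c).
Proof. by rewrite /heron !(rmorphM, rmorphB, rmorphD, rmorphN). Qed.

Lemma rmorph_angle_den a b c : f (angle_den a b c) = angle_den (f a) (f b) (f c).
Proof. by rewrite /angle_den !rmorphM rmorph_nat. Qed.

Lemma rmorph_angle_num a b c i : f (angle_num a b c i) = angle_num (f a) (f b) (f c) i.
Proof.
rewrite /angle_num /cos_num.
by case: i => [[|[|[|[|[|[|k]]]]]] Hk] //=; rewrite ?rmorph0 ?(rmorphM, rmorphB, rmorphD, rmorphXn).
Qed.

End TriangleAlgebraMorphism.

Section TriangleTrigonometry.
Variable R : realType.
Implicit Types a b c k : R.

Lemma one_sub_sqr_cos_law a b c : b != 0 -> c != 0 ->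
  1 - (cos_num a b c / (2 * b * c)) ^+ 2 = heron a b c / (2 * b * c) ^+ 2.
Proof. by move=> b_neq0 c_neq0; rewrite /cos_num /heron; field; rewrite b_neq0 c_neq0. Qed.

Lemma cos_law_bound a b c : b != 0 -> c != 0 -> 0 <= heron a b c ->
  -1 <= cos_num a b c / (2 * b * c) <= 1.
Proof.
move=> b_neq0 c_neq0 heron_ge0; rewrite -ler_norml -(@expr_le1 _ 2) // -normrX ger0_norm ?sqr_ge0 //.
by rewrite -subr_ge0 one_sub_sqr_cos_law // mulr_ge0 ?invr_ge0 ?sqr_ge0.
Qed.

Lemma cos_opp_angle a b c : b != 0 -> c != 0 -> 0 <= heron a b c ->
  cos (opp_angle a b c) = cos_num a b c / (2 * b * c).
Proof. by move=> b_neq0 c_neq0 heron_ge0; rewrite acosK // in_itv cos_law_bound. Qed.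

Lemma sin_opp_angle a b c : 0 < b -> 0 < c -> 0 <= heron a b c ->
  sin (opp_angle a b c) = Num.sqrt (heron a b c) / (2 * b * c).
Proof.
move=> b_gt0 c_gt0 heron_ge0; have [b_neq0 c_neq0] := (lt0r_neq0 b_gt0, lt0r_neq0 c_gt0).
rewrite /opp_angle sin_acos ?cos_law_bound // one_sub_sqr_cos_law //.
rewrite -{1}[heron a b c]sqr_sqrtr // -expr_div_n sqrtr_sqr ger0_norm //.
by rewrite divr_ge0 ?sqrtr_ge0 // !mulr_ge0 // ltW.
Qed.

Lemma heron_gt0 a b c : is_triangle a b c -> 0 < heron a b c.
Proof. by case=> ? ? ? [? ? ?]; rewrite /heron !mulr_gt0 //; lra. Qed.

Lemma angle_pointE (x1 x2 x3 : R) (i : 'I_6) : is_triangle x1 x2 x3 ->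
  angle_point x1 x2 x3 i =
  angle_num x1 x2 x3 i * Num.sqrt (heron x1 x2 x3) ^+ (i < 3)%N / angle_den x1 x2 x3.
Proof.
move=> tri; have heron_ge0 := ltW (heron_gt0 tri); case: tri => x1_gt0 x2_gt0 x3_gt0 _.
have x1_neq0 := lt0r_neq0 x1_gt0; have x2_neq0 := lt0r_neq0 x2_gt0.
have x3_neq0 := lt0r_neq0 x3_gt0.
have heron213_ge0 : 0 <= heron x2 x1 x3 by rewrite heronCA.
have heron312_ge0 : 0 <= heron x3 x1 x2 by rewrite heron_rotr.
rewrite /angle_point /pt6 /angle_num /angle_den.
case: i => [[|[|[|[|[|[|k]]]]]] Hk] //=;
  rewrite ?(cos_opp_angle, sin_opp_angle) // ?(heronCA x1 x2 x3) ?(heron_rotr x1 x2 x3);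
  by field; rewrite x1_neq0 x2_neq0 x3_neq0.
Qed.

Lemma opp_angle_scale k a b c : k != 0 ->
  opp_angle (k * a) (k * b) (k * c) = opp_angle a b c.
Proof.
move=> k_neq0; rewrite /opp_angle /cos_num.
have -> : (k * b) ^+ 2 + (k * c) ^+ 2 - (k * a) ^+ 2 = k ^+ 2 * (b ^+ 2 + c ^+ 2 - a ^+ 2) by ring.
have -> : 2 * (k * b) * (k * c) = k ^+ 2 * (2 * b * c) by ring.
by rewrite -mulf_div divff ?mul1r // expf_neq0.
Qed.

Lemma angle_point_scale k (l1 l2 l3 : R) : k != 0 ->
  angle_point (k * l1) (k * l2) (k * l3) = angle_point l1 l2 l3.
Proof. by move=> k_neq0; rewrite /angle_point !opp_angle_scale. Qed.

Lemma is_triangle_scale k (l1 l2 l3 : R) : 0 < k -> is_triangle l1 l2 l3 ->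
  is_triangle (k * l1) (k * l2) (k * l3).
Proof.
move=> k_gt0 [l1_gt0 l2_gt0 l3_gt0 [lt1 lt2 lt3]].
by split; rewrite ?mulr_gt0 //; split; rewrite -mulrDr ltr_pM2l.
Qed.

End TriangleTrigonometry.

Definition Xt (i : nat) : {mpoly int[3]} := 'X_(inord i).
Definition heron_mpoly : {mpoly int[3]} := heron (Xt 0) (Xt 1) (Xt 2).
Definition sin_degree (e : 'X_{1..6}) : nat := (\sum_(i < 6) (i < 3) * e i)%N.

(* The monomial [x^e] evaluated at [angle_num / D], times [D^d], with
   [sqrt H ^+ sin_degree e] replaced by [H ^+ (sin_degree e)./2]. *)
Definition homog_monomial (d : nat) (e : 'X_{1..6}) : {mpoly int[3]} :=
  \prod_(i < 6) angle_num (Xt 0) (Xt 1) (Xt 2) i ^+ e i *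
  angle_den (Xt 0) (Xt 1) (Xt 2) ^+ (d - mdeg e) * heron_mpoly ^+ (sin_degree e)./2.

Definition rat_part (p : {mpoly int[6]}) : {mpoly int[3]} :=
  \sum_(e <- msupp p | ~~ odd (sin_degree e)) p@_e *: homog_monomial (msize p) e.

Definition irr_part (p : {mpoly int[6]}) : {mpoly int[3]} :=
  \sum_(e <- msupp p | odd (sin_degree e)) p@_e *: homog_monomial (msize p) e.

Definition heron_norm (p : {mpoly int[6]}) : {mpoly int[3]} :=
  rat_part p ^+ 2 - heron_mpoly * irr_part p ^+ 2.

Section EvalAtTriangle.
Variables (R : realType) (x1 x2 x3 : R).
Hypothesis tri : is_triangle x1 x2 x3.
Local Notation ev := (mmap (fun z : int => z%:~R) (pt3 x1 x2 x3)).
Local Notation S := (Num.sqrt (heron x1 x2 x3)).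
Local Notation D := (angle_den x1 x2 x3).

Lemma ev_Xt : [/\ ev (Xt 0) = x1, ev (Xt 1) = x2 & ev (Xt 2) = x3].
Proof. by split; rewrite mmapX mmap1U /pt3 inordK. Qed.

Lemma ev_heron_mpoly : ev heron_mpoly = heron x1 x2 x3.
Proof. by have [e0 e1 e2] := ev_Xt; rewrite rmorph_heron /= e0 e1 e2. Qed.

Lemma ev_angle_den : ev (angle_den (Xt 0) (Xt 1) (Xt 2)) = D.
Proof. by have [e0 e1 e2] := ev_Xt; rewrite rmorph_angle_den /= e0 e1 e2. Qed.

Lemma ev_angle_num i : ev (angle_num (Xt 0) (Xt 1) (Xt 2) i) = angle_num x1 x2 x3 i.
Proof. by have [e0 e1 e2] := ev_Xt; rewrite rmorph_angle_num /= e0 e1 e2. Qed.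

Lemma angle_den_neq0 : D != 0.
Proof. by case: tri => x1_gt0 x2_gt0 x3_gt0 _; rewrite /angle_den !mulf_neq0 ?lt0r_neq0. Qed.

Lemma sqr_sqrt_heron : S ^+ 2 = heron x1 x2 x3.
Proof. by rewrite sqr_sqrtr // ltW // heron_gt0. Qed.

Lemma prod_angle_point (e : 'X_{1..6}) :
  D ^+ mdeg e * mmap1 (angle_point x1 x2 x3) e =
  \prod_(i < 6) angle_num x1 x2 x3 i ^+ e i * S ^+ sin_degree e.
Proof.
rewrite /mmap1; under eq_bigr => i _ do rewrite angle_pointE // !exprMn -exprM.
by rewrite !big_split /= !prodrXr -mdegE exprVn mulrC divfK ?expf_neq0 ?angle_den_neq0.
Qed.

Lemma ev_homog_monomial d e : (mdeg e <= d)%N ->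
  ev (homog_monomial d e) * S ^+ odd (sin_degree e) = D ^+ d * mmap1 (angle_point x1 x2 x3) e.
Proof.
move=> le_ed; rewrite /homog_monomial !rmorphM rmorph_prod !rmorphXn /=.
rewrite ev_angle_den ev_heron_mpoly; under eq_bigr => i _ do rewrite rmorphXn /= ev_angle_num.
rewrite -{1}sqr_sqrt_heron -exprM -!mulrA -exprD mul2n addnC odd_double_half mulrCA -prod_angle_point.
by rewrite mulrA -exprD subnK.
Qed.

Lemma ev_rat_part_add_irr_part p :
  ev (rat_part p) + S * ev (irr_part p) = D ^+ msize p * zeval p (angle_point x1 x2 x3).
Proof.
have -> : zeval p (angle_point x1 x2 x3) =
  \sum_(e <- msupp p) (p@_e)%:~R * mmap1 (angle_point x1 x2 x3) e by [].
rewrite [RHS]mulr_sumr [RHS](bigID (fun e => odd (sin_degree e))) /= [RHS]addrC.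
rewrite /rat_part /irr_part !rmorph_sum mulr_sumr /=.
apply: congr2; rewrite big_seq_cond [RHS]big_seq_cond;
  apply: eq_bigr => e /andP[/msize_mdeg_lt/ltnW le_ep odd_e].
- by rewrite mmapZ mulrCA -ev_homog_monomial // (negbTE odd_e) mulr1.
- by rewrite mmapZ /= mulrCA [RHS]mulrCA -ev_homog_monomial // odd_e expr1 (mulrC S).
Qed.

Lemma ev_heron_norm p : ev (heron_norm p) =
  D ^+ msize p * zeval p (angle_point x1 x2 x3) * (ev (rat_part p) - S * ev (irr_part p)).
Proof.
rewrite -ev_rat_part_add_irr_part /heron_norm rmorphB rmorphXn rmorphM rmorphXn /= ev_heron_mpoly.
by rewrite -{1}sqr_sqrt_heron -exprMn subr_sqr mulrC.
Qed.

End EvalAtTriangle.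

Lemma heron_Xl (S : comNzRingType) (b c : S) :
  heron 'X b%:P c%:P = - (('X + (b + c)%:P) * ('X - (b + c)%:P) * ('X + (c - b)%:P) * ('X + (b - c)%:P)).
Proof. rewrite /heron !(polyCD, polyCN); move: 'X b%:P c%:P => X u v; ring. Qed.

Lemma lead_coef_heron_Xl (R : idomainType) (b c : R) : lead_coef (heron 'X b%:P c%:P) = -1.
Proof. by rewrite heron_Xl lead_coefN !lead_coefM lead_coefXsubC !lead_coefXaddC !mul1r. Qed.

Lemma sqr_eq_mul_sqr_lead_coef_lt0 (R : realDomainType) (a b h : {poly R}) :
  lead_coef h < 0 -> a ^+ 2 = h * b ^+ 2 -> b = 0.
Proof.
move=> h_lt0 /(congr1 lead_coef); rewrite lead_coefM !expr2 !lead_coefM => eq_lead.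
have : lead_coef b ^+ 2 <= 0 by nra.
by rewrite le_eqVlt ltNge sqr_ge0 orbF sqrf_eq0 lead_coef_eq0 => /eqP.
Qed.

Section HeronNormUnivariate.
Variables (R : realType) (y z : R).

Definition pt3_Xl (i : 'I_3) : {poly R} := nth 0 [:: 'X; y%:P; z%:P] i.
Local Notation evX := (mmap (fun n : int => n%:~R) pt3_Xl).

Lemma mmap_pt3_horner (r : {mpoly int[3]}) (t : R) :
  mmap (fun n : int => n%:~R) (pt3 t y z) r = (evX r).[t].
Proof.
rewrite /mmap -horner_evalE rmorph_sum /=; apply: eq_bigr => e _.
rewrite rmorphM /= horner_evalE horner_int; congr (_ * _).
rewrite /mmap1 rmorph_prod /=; apply: eq_bigr => i _.
rewrite rmorphXn /= horner_evalE; congr (_ ^+ _).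
by case: i => [[|[|[|k]]] Hk] //=; rewrite ?hornerX ?hornerC.
Qed.

Lemma ev_eq0_of_sqr_eq_heron_mul_sqr (a b : {mpoly int[3]}) :
  a ^+ 2 = heron_mpoly * b ^+ 2 -> forall t : R, mmap (fun n : int => n%:~R) (pt3 t y z) b = 0.
Proof.
move=> /(congr1 evX); rewrite rmorphXn rmorphM rmorphXn /= rmorph_heron /=.
have [e0 e1 e2] : [/\ evX (Xt 0) = 'X, evX (Xt 1) = y%:P & evX (Xt 2) = z%:P].
  by split; rewrite mmapX mmap1U /pt3_Xl inordK.
rewrite e0 e1 e2 => /sqr_eq_mul_sqr_lead_coef_lt0 evb0 t.
by rewrite mmap_pt3_horner evb0 ?horner0 // lead_coef_heron_Xl ltrN10.
Qed.

End HeronNormUnivariate.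

Lemma heron_norm_eq0 (R : realType) (p : {mpoly int[6]}) (l1 l2 l3 : R) :
  generic_triangle l1 l2 l3 -> zeval p (angle_point l1 l2 l3) = 0 -> heron_norm p = 0.
Proof.
case=> tri [k [k_gt0 indep]] p0; apply/eqP; apply: contraT => /indep.
rewrite /zeval (ev_heron_norm (is_triangle_scale k_gt0 tri)).
by rewrite (angle_point_scale _ _ _ (lt0r_neq0 k_gt0)) p0 mulr0 mul0r eqxx.
Qed.

Lemma zeval_angle_point_eq0 (R : realType) (p : {mpoly int[6]}) (m1 m2 m3 : R) :
  heron_norm p = 0 -> is_triangle m1 m2 m3 -> zeval p (angle_point m1 m2 m3) = 0.
Proof.
move=> /eqP; rewrite subr_eq0 => /eqP norm0 tri.
have irr0 := ev_eq0_of_sqr_eq_heron_mul_sqr m2 m3 norm0 m1.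
have rat0 : mmap (fun n : int => n%:~R) (pt3 m1 m2 m3) (rat_part p) = 0.
  by apply/eqP; rewrite -sqrf_eq0 -rmorphXn norm0 rmorphM rmorphXn /= irr0 expr0n mulr0.
have := ev_rat_part_add_irr_part tri p; rewrite rat0 irr0 mulr0 addr0 => /esym/eqP.
by rewrite mulf_eq0 expf_eq0 (negbTE (angle_den_neq0 tri)) andbF => /eqP.
Qed.

Theorem lemma2p3 (R : realType) (p : {mpoly int[6]}) :
  (exists l1 l2 l3 : R, generic_triangle l1 l2 l3 /\ zeval p (angle_point l1 l2 l3) = 0) ->
  forall m1 m2 m3 : R, is_triangle m1 m2 m3 -> zeval p (angle_point m1 m2 m3) = 0.
Proof.
case=> l1 [l2 [l3 [gen p0]]] m1 m2 m3.
exact/zeval_angle_point_eq0/(heron_norm_eq0 gen p0).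
Qed.
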